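(* Let $R$ be a local ring with stable regular maximal ideal $M$, let $R_1=E(M)$, and suppose $R\subseteq R_1$ is a quadratic extension and $R_1$ is a local ring with maximal ideal $M_1$. Let $R_2=E(M_1)$. (1) If $R_1\neq R_2$, then $M_1=MR_2$, $M_1$ is a stable ideal of $R_1$, and $R_1=R+M_1$. (2) If $R_1=R_2$, then $M_1$ is a principal ideal of $R_1$ and $R_1=R+xR$ for every $x\in R_1\setminus R$.
   Context: All rings are commutative with identity; a local ring is a ring with a unique maximal ideal (not necessarily Noetherian). $Q(R)$ is the total ring of quotients. An ideal is regular if it contains a nonzerodivisor. For a regular fractional ideal $I$ of a ring $A$ (an $A$-submodule of $Q(A)$ containing a nonzerodivisor with $bI\subseteq A$ for some nonzerodivisor $b$), $E(I)=\{q\in Q(A):qI\subseteq I\}$, and $I$ is stable if it is projective as an $E(I)$-module. An extension $R\subseteq S$ is quadratic if $xy\in xR+yR+R$ for all $x,y\in S$. *)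

(* All rings live inside one ambient commutative ring Q,
   which is assumed to be the total ring of quotients of the base ring R.
   Subrings, ideals, fractional ideals are predicates (Q -> Prop). *)
From HB Require Import structures.
From mathcomp Require Import all_boot all_order all_algebra.
Set Implicit Arguments. Unset Strict Implicit. Unset Printing Implicit Defensive.
Import GRing.Theory.
Local Open Scope ring_scope.

Section Defs.
Variable Q : comNzRingType.

Definition same_set (A B : Q -> Prop) : Prop := forall x, A x <-> B x.

Definition subring (A : Q -> Prop) : Prop :=
  [/\ A 0, A 1, (forall x y, A x -> A y -> A (x + y)),
      (forall x, A x -> A (- x)) & (forall x y, A x -> A y -> A (x * y))].

Definition ideal_of (A I : Q -> Prop) : Prop :=
  [/\ (forall x, I x -> A x), I 0, (forall x y, I x -> I y -> I (x + y))
    & (forall a x, A a -> I x -> I (a * x))].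

Definition proper_ideal (A I : Q -> Prop) : Prop := ideal_of A I /\ ~ I 1.

Definition maximal_ideal (A I : Q -> Prop) : Prop :=
  proper_ideal A I /\
  forall J, proper_ideal A J -> (forall x, I x -> J x) -> same_set J I.

(* local ring: a ring with a unique maximal ideal (not necessarily Noetherian) *)
Definition local_ring (A : Q -> Prop) : Prop :=
  subring A /\
  exists M, maximal_ideal A M /\ forall N, maximal_ideal A N -> same_set N M.

Definition nzd (A : Q -> Prop) (r : Q) : Prop :=
  A r /\ forall s, A s -> r * s = 0 -> s = 0.

Definition total_quotient_ring (R : Q -> Prop) : Prop :=
  [/\ subring R,
      (forall r, nzd R r -> exists u, r * u = 1)
    & (forall q, exists a b u, [/\ R a, nzd R b, b * u = 1 & q = a * u])].

Definition regular_ideal (A I : Q -> Prop) : Prop := exists r, I r /\ nzd A r.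

Definition E (I : Q -> Prop) : Q -> Prop := fun q => forall x, I x -> I (q * x).

(* I is a projective S-module (S a subring of Q, I an S-submodule of Q):
   I is a direct summand (retract) of a free S-module S^(J), whose elements
   are the finitely supported functions J -> Q with values in S. *)
Definition free_elt (S : Q -> Prop) (J : Type) (f : J -> Q) : Prop :=
  (forall j, S (f j)) /\
  exists (n : nat) (e : 'I_n -> J), forall j, (forall i, e i <> j) -> f j = 0.

Definition projective_over (S I : Q -> Prop) : Prop :=
  exists (J : Type) (alpha : Q -> J -> Q) (beta : (J -> Q) -> Q),
  [/\ (forall x, I x -> free_elt S (alpha x)),
      (forall x y, I x -> I y -> forall j, alpha (x + y) j = alpha x j + alpha y j)
    & (forall s x, S s -> I x -> forall j, alpha (s * x) j = s * alpha x j)] /\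
  [/\ (forall f, free_elt S f -> I (beta f)),
      (forall f g, free_elt S f -> free_elt S g ->
                   beta (fun j => f j + g j) = beta f + beta g),
      (forall s f, S s -> free_elt S f -> beta (fun j => s * f j) = s * beta f)
    & (forall x, I x -> beta (alpha x) = x)].

Definition stable (I : Q -> Prop) : Prop := projective_over (E I) I.

Definition quadratic_ext (R S : Q -> Prop) : Prop :=
  (forall x, R x -> S x) /\
  forall x y, S x -> S y ->
    exists a b c, [/\ R a, R b, R c & x * y = x * a + y * b + c].

Definition prod_set (I J : Q -> Prop) : Q -> Prop := fun x =>
  exists l : seq (Q * Q),
    (forall p, p \in l -> I p.1 /\ J p.2) /\ x = \sum_(p <- l) p.1 * p.2.

Definition sum_set (I J : Q -> Prop) : Q -> Prop := fun x =>
  exists a b, [/\ I a, J b & x = a + b].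

Definition principal_ideal (A I : Q -> Prop) : Prop :=
  ideal_of A I /\ exists m, A m /\ same_set I (fun x => exists r, A r /\ x = m * r).

End Defs.

From HB Require Import structures.
From mathcomp Require Import all_boot all_order all_algebra ring.
From mathcomp Require classical_sets.
From Stdlib Require Import Classical ClassicalEpsilon FunctionalExtensionality.
Set Implicit Arguments. Unset Strict Implicit. Unset Printing Implicit Defensive.
Import GRing.Theory.
Local Open Scope ring_scope.

(* Over the local ring E(M) the stable regular ideal M is free of rank one:
   M = m E(M) with m invertible in Q (expanding a nonzerodivisor of M through
   the projective coordinates writes 1 as a sum of coordinates of elements of
   M, one of which must be a unit of E(M)). Quadraticity of
   R ⊆ E(M) gives M1^2 ⊆ M, and gives M1 = M unless E(M) = R + M1.
   If m^-1 M1 ⊆ E(M1), then M1 = m E(M1) = M E(M1) is stable, while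
   E(M) = E(M1) would force M1 = M. Otherwise some u v m^-1 with u, v in M1 is
   a unit of E(M), so M1 = u E(M), E(M) = E(M1), and E(M) = R + M1 = R + u R
   because u M1 ⊆ M ⊆ R; any x in E(M) \ R can then replace u. When M1 = M,
   the relations for x^2 and x y in R + x R + y R show E(M) = R + x R. *)

Section Closure.
Variable Q : comNzRingType.
Implicit Types A I : Q -> Prop.

Lemma subring0 A : subring A -> A 0. Proof. by case. Qed.
Lemma subring1 A : subring A -> A 1. Proof. by case. Qed.
Lemma subringD A x y : subring A -> A x -> A y -> A (x + y).
Proof. by case=> _ _ + _ _; apply. Qed.
Lemma subringN A x : subring A -> A x -> A (- x).
Proof. by case=> _ _ _ + _; apply. Qed.
Lemma subringB A x y : subring A -> A x -> A y -> A (x - y).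
Proof. by move=> hA Ax Ay; apply: subringD hA Ax (subringN hA Ay). Qed.
Lemma subringM A x y : subring A -> A x -> A y -> A (x * y).
Proof. by case=> _ _ _ _; apply. Qed.

Lemma ideal_sub A I x : ideal_of A I -> I x -> A x.
Proof. by case=> + _ _ _; apply. Qed.
Lemma ideal0 A I : ideal_of A I -> I 0. Proof. by case. Qed.
Lemma idealD A I x y : ideal_of A I -> I x -> I y -> I (x + y).
Proof. by case=> _ _ + _; apply. Qed.
Lemma idealM A I a x : ideal_of A I -> A a -> I x -> I (a * x).
Proof. by case=> _ _ _; apply. Qed.
Lemma idealMr A I x a : ideal_of A I -> I x -> A a -> I (x * a).
Proof. by rewrite mulrC => hI Ix Aa; apply: idealM hI Aa Ix. Qed.
Lemma idealN A I x : subring A -> ideal_of A I -> I x -> I (- x).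
Proof.
by move=> hA hI Ix; rewrite -mulN1r; apply: idealM hI (subringN hA (subring1 hA)) Ix.
Qed.
Lemma idealB A I x y : subring A -> ideal_of A I -> I x -> I y -> I (x - y).
Proof. by move=> hA hI Ix Iy; apply: idealD hI Ix (idealN hA hI Iy). Qed.

End Closure.

Ltac subring_closed :=
  repeat first [assumption | apply: subringD | apply: subringN | apply: subringM].

Section LocalRing.
Variable Q : comNzRingType.
Implicit Types A N : Q -> Prop.

Lemma maximal_ideal_of_nonunit A a :
  subring A -> A a -> ~ (exists b, A b /\ a * b = 1) ->
  exists N, maximal_ideal A N /\ N a.
Proof.
move=> hA Aa nunit.
(* [X x -> X a] rather than [X a] keeps the empty chain admissible *)
pose P X := [/\ forall x, X x -> A x, forall x y, X x -> X y -> X (x + y),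
  forall s x, A s -> X x -> X (s * x), ~ X 1 & forall x, X x -> X a].
have [N [[NA ND NM N1 Na] Nmax]] :
    exists N, P N /\ forall X, classical_sets.proper N X -> ~ P X.
  apply: classical_sets.Zorn_bigcup => F FP Ftot; split.
  - by move=> x [X /FP[XA _ _ _ _] /XA].
  - move=> x y [X FX Xx] [Y FY Yy]; case: (Ftot X Y FX FY) => [XY|YX].
    + by exists Y => //; case: (FP Y FY) => _ + _ _ _; apply=> //; apply: XY.
    + by exists X => //; case: (FP X FX) => _ + _ _ _; apply=> //; apply: YX.
  - by move=> s x As [X FX Xx]; exists X => //; case: (FP X FX) => _ _ + _ _; apply.
  - by move=> [X /FP[]].
  - by move=> x [X FX Xx]; exists X => //; case: (FP X FX) => _ _ _ _ /(_ x Xx).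
have {}Na : N a.
  apply: NNPP => nNa; apply: (Nmax (fun x => exists s, A s /\ x = a * s)).
    split=> [x /Na //|sub]; apply: nNa; apply: sub.
    by exists 1; rewrite mulr1; split=> //; apply: subring1.
  split.
  - by move=> _ [s [As ->]]; apply: subringM.
  - move=> _ _ [s [As ->]] [t [At ->]].
    by exists (s + t); split; [apply: subringD | ring].
  - move=> t _ At [s [As ->]].
    by exists (t * s); split; [apply: subringM | ring].
  - by move=> [s [As e]]; apply: nunit; exists s.
  - by move=> _ _; exists 1; rewrite mulr1; split=> //; apply: subring1.
exists N; split=> //; split.
  by split=> //; split=> //; have := NM 0 a (subring0 hA) Na; rewrite mul0r.
move=> J [[JA J0 JD JM] J1] NJ x; split=> [Jx|]; last exact: NJ.
apply: NNPP => nNx; apply: (Nmax J); first by split=> // sub; apply: nNx; apply: sub.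
by split=> // y _; apply: NJ.
Qed.

Lemma local_ring_unit A N a :
  local_ring A -> maximal_ideal A N -> A a -> ~ N a -> exists b, A b /\ a * b = 1.
Proof.
move=> [hA [N0 [_ uniq]]] hN Aa Na; apply: NNPP => nunit.
have [N' [hN' N'a]] := maximal_ideal_of_nonunit hA Aa nunit.
by apply: Na; apply/(uniq N hN a)/(uniq N' hN' a).
Qed.

Lemma maximal_ideal_unit_mod A N a :
  subring A -> maximal_ideal A N -> A a -> ~ N a ->
  exists b n, [/\ A b, N n & a * b = 1 + n].
Proof.
move=> hA [[hN N1] Nmax] Aa Na.
pose J x := exists n s, [/\ N n, A s & x = n + a * s].
case: (classic (J 1)) => [[n [s [Nn As e1]]] | J1].
  by exists s, (- n); split=> //; [exact: idealN hA hN Nn | rewrite e1; ring].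
have hJ : ideal_of A J.
  split.
  - move=> _ [n [s [Nn As ->]]].
    exact: subringD hA (ideal_sub hN Nn) (subringM hA Aa As).
  - by exists 0, 0; split; [exact: ideal0 hN | exact: subring0 hA | ring].
  - move=> _ _ [n [s [Nn As ->]]] [n' [s' [Nn' As' ->]]].
    exists (n + n'), (s + s'); split; last ring.
    - exact: idealD hN Nn Nn'.
    - exact: subringD hA As As'.
  - move=> b _ Ab [n [s [Nn As ->]]].
    exists (b * n), (b * s); split; last ring.
    - exact: idealM hN Ab Nn.
    - exact: subringM hA Ab As.
have /(_ a) [Ja _] : same_set J N.
  apply: Nmax; first by split.
  by move=> x Nx; exists x, 0; split; [| exact: subring0 hA | ring].
by case: Na; apply: Ja; exists 0, 1; split; [exact: ideal0 hN | exact: subring1 hA | ring].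
Qed.

End LocalRing.

Section FreeModule.
Variables (Q : comNzRingType) (J : Type).

Definition point_mass (a j : J) : Q :=
  if excluded_middle_informative (j = a) then 1 else 0.

Definition erase (a : J) (f : J -> Q) (j : J) : Q :=
  if excluded_middle_informative (j = a) then 0 else f j.

Lemma point_mass_split (f : J -> Q) a : f = (fun j => f a * point_mass a j + erase a f j).
Proof.
apply: functional_extensionality => j; rewrite /point_mass /erase.
by case: excluded_middle_informative => /= [->|]; rewrite ?mulr1 ?addr0 ?mulr0 ?add0r.
Qed.

Lemma free_elt_point_mass S (a : J) : subring S -> free_elt S (point_mass a).
Proof.
move=> hS; split=> [j|].
  by rewrite /point_mass; case: excluded_middle_informative => ?;
    [exact: subring1 hS | exact: subring0 hS].
exists 1%N, (fun _ => a) => j /(_ ord0) aj; rewrite /point_mass.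
by case: excluded_middle_informative => // ja; case: aj.
Qed.

Lemma free_linear_expand S I (beta : (J -> Q) -> Q) n (e : 'I_n -> J) f :
  subring S -> I 0 ->
  (forall f, free_elt S f -> I (beta f)) ->
  (forall f g, free_elt S f -> free_elt S g ->
     beta (fun j => f j + g j) = beta f + beta g) ->
  (forall s f, S s -> free_elt S f -> beta (fun j => s * f j) = s * beta f) ->
  (forall j, S (f j)) -> (forall j, (forall i, e i <> j) -> f j = 0) ->
  exists y : 'I_n -> Q, (forall i, I (y i)) /\ beta f = \sum_(i < n) f (e i) * y i.
Proof.
move=> hS I0 beta_in betaD betaZ.
elim: n e f => [|n IHn] e f Sf f_supp.
  exists (fun _ => 0); split=> //; rewrite big_ord0.
  have -> : f = (fun j => 0 * f j).
    by apply: functional_extensionality => j; rewrite mul0r f_supp //; case.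
  by rewrite betaZ ?mul0r //; [exact: subring0 hS | split=> //; exists 0%N, e].
pose a := e ord0; have point_mass_free := free_elt_point_mass a hS.
have Serase j : S (erase a f j).
  by rewrite /erase; case: excluded_middle_informative => ?; [exact: subring0 hS | exact: Sf].
have erase_supp j : (forall i, e (lift ord0 i) <> j) -> erase a f j = 0.
  rewrite /erase; case: excluded_middle_informative => //= ja nsupp.
  apply: f_supp => i; case: (unliftP ord0 i) => [i' ->|->] //.
  by move=> eja; apply: ja; rewrite -eja.
have [y [Iy betag]] := IHn (fun i => e (lift ord0 i)) _ Serase erase_supp.
(* later occurrences of [a] in [e] get coefficient [0], as [erase a f] vanishes at [a] *)
exists (fun i => if unlift ord0 i is Some i'
  then (if excluded_middle_informative (e i = a) then 0 else y i')
  else beta (point_mass a)).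
split.
  move=> i; case: (unlift ord0 i) => [i'|]; last exact: beta_in.
  by case: excluded_middle_informative => /= ?; [exact: I0 | exact: Iy].
have fa_free : free_elt S (fun j => f a * point_mass a j).
  split=> [j|]; first exact: subringM hS (Sf a) (point_mass_free.1 j).
  have [m [e' e'_supp]] := point_mass_free.2.
  by exists m, e' => j /e'_supp ->; rewrite mulr0.
have erase_free : free_elt S (erase a f).
  split=> //; exists n.+1, e => j /f_supp; rewrite /erase => ->.
  by case: excluded_middle_informative.
rewrite {1}(point_mass_split f a) betaD // betaZ //.
rewrite big_ord_recl unlift_none betag; congr (_ + _).
apply: eq_bigr => i _; rewrite liftK /erase; case: excluded_middle_informative => /= ?;
  by rewrite ?mulr0 ?mul0r.
Qed.

End FreeModule.

Section UnitGenerated.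
Variable Q : comNzRingType.
Implicit Types S I N : Q -> Prop.

(* [I = u S] with [u] invertible in [Q] *)
Definition unit_generated S I (u : Q) : Prop :=
  I u /\ exists v, u * v = 1 /\ forall x, I x -> S (x * v).

Lemma projective_local_unit_generated S N I r0 ri :
  local_ring S -> maximal_ideal S N -> (forall x, I x -> S x) -> I 0 ->
  I r0 -> r0 * ri = 1 -> projective_over S I -> exists m, unit_generated S I m.
Proof.
move=> hSloc hN IS I0 Ir0 r0ri
  [J [alpha [beta [[alpha_free _ alphaZ] [beta_in betaD betaZ beta_alpha]]]]].
have hS := hSloc.1.
(* [r0 * alpha x = alpha (r0 * x) = x * alpha r0], as [x] and [r0] lie in [S] *)
have alphaE x j : I x -> alpha x j = ri * (x * alpha r0 j).
  move=> Ix; have r0alpha : r0 * alpha x j = x * alpha r0 j.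
    by rewrite -(alphaZ _ _ (IS _ Ir0) Ix) -(alphaZ _ _ (IS _ Ix) Ir0) mulrC.
  by rewrite -r0alpha mulrA (mulrC ri) r0ri mul1r.
have [Salpha [n [e alpha_supp]]] := alpha_free r0 Ir0.
have [y [Iy betaE]] := free_linear_expand hS I0 beta_in betaD betaZ Salpha alpha_supp.
have one : 1 = \sum_(i < n) alpha (y i) (e i).
  rewrite -r0ri -{1}(beta_alpha r0 Ir0) betaE mulr_suml.
  by apply: eq_bigr => i _; rewrite (alphaE (y i)) //; ring.
have [i nNi] : exists i, ~ N (alpha (y i) (e i)).
  apply: NNPP => allN; case: hN => [[hNid N1] _]; apply: N1; rewrite one.
  apply: big_ind => [|u v|i _]; [exact: ideal0 hNid | exact: idealD hNid |].
  by apply: NNPP => nNi; apply: allN; exists i.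
have [w [Sw ww]] := local_ring_unit hSloc hN ((alpha_free _ (Iy i)).1 (e i)) nNi.
exists (y i); split; first exact: Iy.
exists (ri * alpha r0 (e i) * w); split; first by rewrite -ww (alphaE (y i)) //; ring.
move=> x Ix; have -> : x * (ri * alpha r0 (e i) * w) = alpha x (e i) * w.
  by rewrite (alphaE x) //; ring.
exact: subringM hS ((alpha_free x Ix).1 (e i)) Sw.
Qed.

Lemma unit_generated_subideal S I I' u :
  unit_generated S I u -> I' u -> (forall x, I' x -> I x) -> unit_generated S I' u.
Proof. by move=> [_ [v [uv Iv]]] I'u I'I; split=> //; exists v; split=> // x /I'I /Iv. Qed.

Lemma unit_generated_minimal S I I' u :
  unit_generated S I u -> I' u -> (forall s x, S s -> I' x -> I' (s * x)) ->
  forall x, I x -> I' x.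
Proof.
move=> [_ [v [uv Iv]]] I'u I'M x Ix.
have -> : x = x * v * u by rewrite -mulrA (mulrC v) uv mulr1.
exact: I'M (Iv x Ix) I'u.
Qed.

Lemma unit_generated_E S I u : ideal_of S I -> unit_generated S I u -> same_set S (E I).
Proof.
move=> hI [Iu [v [uv Iv]]] q; split=> [Sq x Ix | EIq]; first exact: idealM hI Sq Ix.
by have := Iv _ (EIq u Iu); rewrite -mulrA uv mulr1.
Qed.

Lemma unit_generated_principal S I u :
  ideal_of S I -> unit_generated S I u -> principal_ideal S I.
Proof.
move=> hI [Iu [v [uv Iv]]]; split=> //; exists u; split; first exact: ideal_sub hI Iu.
move=> x; split=> [Ix | [r [Sr ->]]]; last exact: idealMr hI Iu Sr.
by exists (x * v); split; [exact: Iv | rewrite mulrCA uv mulr1].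
Qed.

Lemma unit_generated_stable I u : unit_generated (E I) I u -> stable I.
Proof.
move=> [Iu [v [uv Iv]]].
have free_unit (f : unit -> Q) : (forall j, E I (f j)) -> free_elt (E I) f.
  by move=> EIf; split=> //; exists 1%N, (fun _ => tt) => -[] /(_ ord0).
exists unit, (fun x _ => v * x), (fun f => u * f tt); split; split.
- by move=> x Ix; apply: free_unit => _; rewrite mulrC; exact: Iv.
- by move=> x y _ _ _; rewrite mulrDr.
- by move=> s x _ _ _; rewrite mulrCA.
- by move=> f [EIf _]; rewrite mulrC; exact: EIf.
- by move=> f g _ _; rewrite mulrDr.
- by move=> s f _ _; rewrite mulrCA.
- by move=> x _; rewrite mulrA uv mul1r.
Qed.

Lemma unit_generated_prod S I I' u :
  ideal_of S I -> unit_generated (E I) I u -> I' u -> (forall x, I' x -> I x) ->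
  same_set I (prod_set I' (E I)).
Proof.
move=> hI [Iu [v [uv Iv]]] I'u I'I z; split=> [Iz | [l [lI ->]]].
  exists [:: (u, z * v)]; split; last by rewrite big_seq1 /= mulrCA uv mulr1.
  by move=> p; rewrite inE => /eqP -> /=; split; last exact: Iv.
rewrite big_seq; apply: big_ind => [|x y|p /lI [/I'I I'p EIp]];
  [exact: ideal0 hI | exact: idealD hI |].
by rewrite mulrC; exact: EIp.
Qed.
End UnitGenerated.

Definition quadratic_local (Q : comNzRingType) (R M M1 : Q -> Prop) : Prop :=
  [/\ subring R, maximal_ideal R M, quadratic_ext R (E M),
      local_ring (E M) & maximal_ideal (E M) M1].

Definition span_1x (Q : comNzRingType) (R : Q -> Prop) (x : Q) : Q -> Prop :=
  fun y => exists a b, [/\ R a, R b & y = a + x * b].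

Section QuadraticExtension.
Variables (Q : comNzRingType) (R M M1 : Q -> Prop).
Hypothesis hS : quadratic_local R M M1.

Let hR : subring R. Proof. by case: hS. Qed.
Let hM : maximal_ideal R M. Proof. by case: hS. Qed.
Let hquad : quadratic_ext R (E M). Proof. by case: hS. Qed.
Let hR1loc : local_ring (E M). Proof. by case: hS. Qed.
Let hM1 : maximal_ideal (E M) M1. Proof. by case: hS. Qed.
Let hR1 : subring (E M). Proof. exact: hR1loc.1. Qed.
Let hMid : ideal_of R M. Proof. exact: hM.1.1. Qed.
Let hM1id : ideal_of (E M) M1. Proof. exact: hM1.1.1. Qed.
Let M_neq1 : ~ M 1. Proof. exact: hM.1.2. Qed.
Let M1_neq1 : ~ M1 1. Proof. exact: hM1.1.2. Qed.
Let R_sub_R1 x : R x -> E M x. Proof. exact: hquad.1. Qed.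
Let M_sub_R x : M x -> R x. Proof. exact: ideal_sub hMid. Qed.
Let M_sub_R1 x : M x -> E M x. Proof. by move/M_sub_R/R_sub_R1. Qed.
Let M1_sub_R1 x : M1 x -> E M x. Proof. exact: ideal_sub hM1id. Qed.
Let R1_unit a : E M a -> ~ M1 a -> exists b, E M b /\ a * b = 1.
Proof. exact: local_ring_unit hR1loc hM1. Qed.
Let R_unit_mod a : R a -> ~ M a -> exists b n, [/\ R b, M n & a * b = 1 + n].
Proof. exact: maximal_ideal_unit_mod hR hM. Qed.

Lemma M_unit_generated :
  total_quotient_ring R -> regular_ideal R M -> stable M ->
  exists m, unit_generated (E M) M m.
Proof.
move=> [_ Rinv _] [r0 [Mr0 nzr0]] Mst; have [ri r0ri] := Rinv r0 nzr0.
exact: projective_local_unit_generated hR1loc hM1 M_sub_R1 (ideal0 hMid) Mr0 r0ri Mst.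
Qed.

Lemma M_sub_M1 x : M x -> M1 x.
Proof.
move=> Mx; apply: NNPP => nM1x; have [b [Eb xb]] := R1_unit (M_sub_R1 Mx) nM1x.
by apply: M_neq1; rewrite -xb mulrC; exact: Eb.
Qed.

Lemma R_M1_sub_M x : R x -> M1 x -> M x.
Proof.
move=> Rx M1x; apply: NNPP => nMx; have [b [n [Rb Mn xb]]] := R_unit_mod Rx nMx.
apply: M1_neq1; have -> : 1 = x * b - n by rewrite xb; ring.
exact: idealB hR1 hM1id (idealMr hM1id M1x (R_sub_R1 Rb)) (M_sub_M1 Mn).
Qed.

Lemma M1_sq_sub_M u : M1 u -> M (u * u).
Proof.
move=> M1u; have Eu := M1_sub_R1 M1u.
have [a [b [c [Ra Rb Rc uu]]]] := hquad.2 u u Eu Eu.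
have Rab : R (a + b) by exact: subringD hR Ra Rb.
have uuab : u * (u - (a + b)) = c by rewrite mulrBr uu; ring.
have Mc : M c.
  apply: (R_M1_sub_M Rc); rewrite -uuab.
  exact: idealMr hM1id M1u (subringB hR1 Eu (R_sub_R1 Rab)).
case: (classic (M (a + b))) => [Mab | nMab].
  by rewrite uu -mulrDr; exact: idealD hMid (Eu _ Mab) Mc.
have nM1 : ~ M1 (u - (a + b)).
  move=> M1uab; apply: nMab; apply: (R_M1_sub_M Rab).
  by rewrite -[a + b](subKr u); exact: idealB hR1 hM1id M1u M1uab.
have [w [Ew uw]] := R1_unit (subringB hR1 Eu (R_sub_R1 Rab)) nM1.
suff Mu : M u by exact: Eu.
have -> : u = w * c by rewrite -uuab mulrCA (mulrC w) uw mulr1.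
exact: Ew.
Qed.

Lemma M1_mul_sub_M u v : M1 u -> M1 v -> M (u * v).
Proof.
move=> M1u M1v.
have [a [b [c [Ra Rb Rc uv]]]] := hquad.2 u v (M1_sub_R1 M1u) (M1_sub_R1 M1v).
have Mc : M c.
  apply: (R_M1_sub_M Rc); have -> : c = u * v - u * a - v * b by rewrite uv; ring.
  apply: idealB hR1 hM1id (idealB hR1 hM1id _ _) _.
  - exact: idealMr hM1id M1u (M1_sub_R1 M1v).
  - exact: idealMr hM1id M1u (R_sub_R1 Ra).
  - exact: idealMr hM1id M1v (R_sub_R1 Rb).
wlog nMb : u v a b M1u M1v Ra Rb uv / ~ M b.
  move=> gen; case: (classic (M b)) => [Mb | nMb]; last exact: (gen u v a b).
  case: (classic (M a)) => [Ma | nMa].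
    rewrite uv; apply: idealD hMid (idealD hMid _ _) Mc.
    - exact: M1_sub_R1 M1u _ Ma.
    - exact: M1_sub_R1 M1v _ Mb.
  by rewrite mulrC; apply: (gen v u b a) => //; rewrite mulrC uv; ring.
have [b' [n [Rb' Mn bb']]] := R_unit_mod Rb nMb.
(* [u v b = u (u v - u a - c)] only involves [u * u] and [c] *)
have Muuv : M (u * v * b).
  have vb : v * b = u * v - u * a - c by rewrite uv; ring.
  have -> : u * v * b = v * (u * u) - a * (u * u) - u * c by rewrite -mulrA vb; ring.
  have Muu := M1_sq_sub_M M1u.
  apply: idealB hR hMid (idealB hR hMid _ _) _.
  - exact: M1_sub_R1 M1v _ Muu.
  - exact: idealM hMid Ra Muu.
  - exact: M1_sub_R1 M1u _ Mc.
have uvE : u * v = b' * (u * v * b) - u * v * n.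
  have -> : b' * (u * v * b) = u * v * (b * b') by ring.
  by rewrite bb'; ring.
rewrite uvE.
apply: idealB hR hMid (idealM hMid Rb' Muuv) _.
by have Euv := subringM hR1 (M1_sub_R1 M1u) (M1_sub_R1 M1v); exact: Euv _ Mn.
Qed.

Lemma R1_sum_or_M1_sub_M :
  same_set (E M) (sum_set R M1) \/ forall u, M1 u -> M u.
Proof.
case: (classic (exists t, E M t /\ forall a, R a -> ~ M1 (t - a)))
  => [[t [Et tR]] | R1_sum]; [right | left]; last first.
  move=> y; split=> [Ey | [a [b [Ra M1b ->]]]].
    apply: NNPP => nsum; apply: R1_sum; exists y; split=> // a Ra M1ya.
    by apply: nsum; exists a, (y - a); split=> //; ring.
  exact: subringD hR1 (R_sub_R1 Ra) (M1_sub_R1 M1b).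
move=> u M1u.
have [a [b [c [Ra Rb Rc ut]]]] := hquad.2 u t (M1_sub_R1 M1u) Et.
have tbcE : t * b + c = u * (t - a) by rewrite mulrBr ut; ring.
have M1tbc : M1 (t * b + c).
  by rewrite tbcE; exact: idealMr hM1id M1u (subringB hR1 Et (R_sub_R1 Ra)).
(* otherwise [t + c / b] would lie in [M1] *)
have Mb : M b.
  apply: NNPP => nMb; have [b' [n [Rb' Mn bb']]] := R_unit_mod Rb nMb.
  apply: (tR (- (c * b'))); first exact: subringN hR (subringM hR Rc Rb').
  have -> : t - - (c * b') = b' * (t * b + c) - t * n + t * (1 + n - b * b') by ring.
  rewrite bb' subrr mulr0 addr0.
  apply: idealB hR1 hM1id (idealM hM1id (R_sub_R1 Rb') M1tbc) _.
  exact: idealM hM1id Et (M_sub_M1 Mn).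
have Mc : M c.
  apply: (R_M1_sub_M Rc); rewrite -[c](addKr (t * b)).
  exact: idealD hM1id (idealN hR1 hM1id (idealM hM1id Et (M_sub_M1 Mb))) M1tbc.
have Mut : M (u * (t - a)) by rewrite -tbcE; exact: idealD hMid (Et _ Mb) Mc.
have [w [Ew tw]] := R1_unit (subringB hR1 Et (R_sub_R1 Ra)) (tR a Ra).
have -> : u = w * (u * (t - a)) by rewrite mulrCA (mulrC w) tw mulr1.
exact: Ew.
Qed.

Lemma span_1x_sub_R1 x y : E M x -> span_1x R x y -> E M y.
Proof.
move=> Ex [a [b [Ra Rb ->]]].
exact: subringD hR1 (R_sub_R1 Ra) (subringM hR1 Ex (R_sub_R1 Rb)).
Qed.

Lemma span_1x_of_nonresidue x :
  E M x -> (forall a, R a -> ~ M1 (x - a)) -> same_set (E M) (span_1x R x).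
Proof.
move=> Ex xR y; split=> [Ey|]; last exact: span_1x_sub_R1.
have [a [b [c [Ra Rb Rc xy]]]] := hquad.2 x y Ex Ey.
have Exb : E M (x - b) := subringB hR1 Ex (R_sub_R1 Rb).
have [a1 [b1 [c1 [Ra1 Rb1 Rc1 xbxb]]]] := hquad.2 _ _ Exb Exb.
have [a2 [b2 [c2 [Ra2 Rb2 Rc2 xx]]]] := hquad.2 x x Ex Ex.
(* [y (x - b) = x a + c] and [(x - b) (x - d) = c1] is a unit modulo [M]:
   multiplying by [x - d] and reducing [x * x] puts [y] in [R + x R] *)
pose d := b + (a1 + b1).
have Rd : R d by rewrite /d; subring_closed.
have c1E : (x - b) * (x - d) = c1.
  have -> : (x - b) * (x - d) = (x - b) * (x - b) - ((x - b) * a1 + (x - b) * b1).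
    by rewrite /d; ring.
  by rewrite xbxb; ring.
have yxb : y * (x - b) = x * a + c by rewrite mulrBr mulrC xy; ring.
(* [c1] is a product of two units of [E M] *)
have nMc1 : ~ M c1.
  have [v [Ev xbv]] := R1_unit Exb (xR b Rb).
  have [w [Ew xdw]] := R1_unit (subringB hR1 Ex (R_sub_R1 Rd)) (xR d Rd).
  move=> /M_sub_M1 M1c1; apply: M1_neq1.
  have <- : (x - b) * v * ((x - d) * w) = 1 by rewrite xbv xdw mulr1.
  have -> : (x - b) * v * ((x - d) * w) = c1 * (v * w) by rewrite -c1E; ring.
  exact: idealMr hM1id M1c1 (subringM hR1 Ev Ew).
have [q [n [Rq Mn c1q]]] := R_unit_mod Rc1 nMc1.
have Ryn : R (y * n) := M_sub_R (Ey _ Mn).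
have yE : y = (x * a + c) * (x - d) * q - y * n.
  have -> : (x * a + c) * (x - d) * q = y * (1 + n) by rewrite -c1q -c1E -yxb; ring.
  by ring.
exists ((a * c2 - c * d) * q - y * n), ((a * (a2 + b2) + c - a * d) * q).
split; [subring_closed | subring_closed |].
rewrite {1}yE.
have -> : (x * a + c) * (x - d) = a * (x * x) + x * (c - a * d) - c * d by ring.
by rewrite xx; ring.
Qed.

Lemma span_1x_exchange u :
  (forall t, E M t -> exists a b, [/\ R a, R b & t = a + u * b]) -> E M u ->
  forall x, E M x -> ~ R x -> same_set (E M) (span_1x R x).
Proof.
move=> span_u Eu x Ex nRx y; split=> [Ey|]; last exact: span_1x_sub_R1.
have [a0 [b0 [Ra0 Rb0 xE]]] := span_u x Ex.
have nMb0 : ~ M b0.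
  move=> Mb0; apply: nRx; rewrite xE.
  exact: subringD hR Ra0 (M_sub_R (Eu _ Mb0)).
have [b' [n [Rb' Mn b0b']]] := R_unit_mod Rb0 nMb0.
have [a [b [Ra Rb yE]]] := span_u y Ey.
have Run : R (u * n) := M_sub_R (Eu _ Mn).
exists (a - a0 * b' * b - u * n * b), (b' * b); split; [subring_closed | subring_closed |].
rewrite yE xE; have -> : (a0 + u * b0) * (b' * b) = a0 * b' * b + u * b * (b0 * b') by ring.
by rewrite b0b'; ring.
Qed.

Lemma unit_generated_R1_span u :
  same_set (E M) (sum_set R M1) -> unit_generated (E M) M1 u ->
  forall t, E M t -> exists a b, [/\ R a, R b & t = a + u * b].
Proof.
move=> R1_sum [M1u [v [uv M1v]]] _ /R1_sum [a [w [Ra M1w ->]]].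
have [a1 [w1 [Ra1 M1w1 wvE]]] := (R1_sum _).1 (M1v w M1w).
have Ruw1 : R (u * w1) := M_sub_R (M1_mul_sub_M M1u M1w1).
exists (a + u * w1), a1; split; [subring_closed | done |].
have -> : w = u * (w * v) by rewrite mulrCA uv mulr1.
by rewrite wvE; ring.
Qed.

Lemma M1_unit_generated_over_R1 m :
  unit_generated (E M) M m -> ~ unit_generated (E M1) M1 m ->
  exists u, unit_generated (E M) M1 u.
Proof.
move=> [Mm [v [mv Mv]]] nP.
have [z [w [M1z M1w nM1]]] : exists z w, [/\ M1 z, M1 w & ~ M1 (z * v * w)].
  apply: NNPP => allM1; apply: nP; split; first exact: M_sub_M1.
  exists v; split=> // z M1z w M1w; apply: NNPP => nM1.
  by apply: allM1; exists z, w.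
have Ezvw : E M (z * v * w) by rewrite mulrAC; exact: Mv (M1_mul_sub_M M1z M1w).
have [c [Ec zvwc]] := R1_unit Ezvw nM1.
exists z; split=> //; exists (v * w * c); split; first by rewrite -zvwc; ring.
move=> x M1x; have -> : x * (v * w * c) = x * w * v * c by ring.
exact: subringM hR1 (Mv _ (M1_mul_sub_M M1x M1w)) Ec.
Qed.

Lemma principal_span_1x_of_M1_sub_M m :
  unit_generated (E M) M m -> (forall u, M1 u -> M u) ->
  principal_ideal (E M) M1 /\ forall x, E M x -> ~ R x -> same_set (E M) (span_1x R x).
Proof.
move=> hm M1M; split.
  exact: unit_generated_principal hM1id (unit_generated_subideal hm (M_sub_M1 hm.1) M1M).
move=> x Ex nRx; apply: (span_1x_of_nonresidue Ex) => a Ra /M1M/M_sub_R Rxa.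
by apply: nRx; rewrite -[x](subrK a); exact: subringD hR Rxa Ra.
Qed.
End QuadraticExtension.


Theorem lemma3p10 (Q : comNzRingType) (R M M1 : Q -> Prop)
  (hQ : total_quotient_ring R)
  (hRloc : local_ring R) (hM : maximal_ideal R M)
  (hMreg : regular_ideal R M) (hMst : stable M)
  (hquad : quadratic_ext R (E M))
  (hR1loc : local_ring (E M)) (hM1 : maximal_ideal (E M) M1) :
  (~ same_set (E M) (E M1) ->
     [/\ same_set M1 (prod_set M (E M1)), stable M1 & same_set (E M) (sum_set R M1)]) /\
  (same_set (E M) (E M1) ->
     principal_ideal (E M) M1 /\
     forall x, E M x -> ~ R x ->
       same_set (E M) (fun y => exists a b, [/\ R a, R b & y = a + x * b])).
Proof.
have hS : quadratic_local R M M1 by split=> //; case: hQ.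
have hM1id := hM1.1.1.
have [m hm] := M_unit_generated hS hQ hMreg hMst.
split=> [ne | EE].
  have P : unit_generated (E M1) M1 m.
    apply: NNPP => /(M1_unit_generated_over_R1 hS hm) [u hu]; apply: ne.
    exact: unit_generated_E hM1id hu.
  have R1_sum : same_set (E M) (sum_set R M1).
    case: (R1_sum_or_M1_sub_M hS) => // M1M; case: ne; apply: unit_generated_E hM1id _.
    exact: unit_generated_subideal hm (M_sub_M1 hS hm.1) M1M.
  split=> //; last exact: unit_generated_stable P.
  exact: unit_generated_prod hM1id P hm.1 (M_sub_M1 hS).
case: (R1_sum_or_M1_sub_M hS) => [R1_sum | ]; last exact: (principal_span_1x_of_M1_sub_M hS hm).
case: (classic (unit_generated (E M1) M1 m)) => [P | nP].
  apply: (principal_span_1x_of_M1_sub_M hS hm).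
  by apply: (unit_generated_minimal P hm.1) => s x /EE Es /Es.
have [u hu] := M1_unit_generated_over_R1 hS hm nP.
split; first exact: unit_generated_principal hM1id hu.
exact: (span_1x_exchange hS (unit_generated_R1_span hS R1_sum hu) (ideal_sub hM1id hu.1)).
Qed.
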